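(* Let $(\frac pq,\frac rs)$ be a Farey pair of order $n$ with $s>q\ge 2$, let $d=\lfloor n/q\rfloor$, $\alpha\in(0,1)$, $\beta=1-\alpha$, and $\phi_\alpha(t)=(t^q-\beta)^d-\alpha^dt^{qd-s}$. If $t_1$ and $t_2$ are roots of $\phi_\alpha$ with $|t_1|=|t_2|$, then either $t_2=t_1$ or $t_2=\overline{t_1}$.
   Context: $\mathcal{F}_n=\{p/q:0\le p<q\le n,\ \gcd(p,q)=1\}$; a Farey pair of order $n$ is a pair $(\frac pq,\frac rs)$ of elements of $\mathcal F_n$ with $\frac pq<\frac rs$ and no element of $\mathcal F_n$ strictly between them. $\phi_\alpha$ is regarded as a rational function of $t$. *)

From HB Require Import structures.
From mathcomp Require Import all_boot all_order all_algebra.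
From mathcomp Require Import reals.
From mathcomp Require Import complex.
Set Implicit Arguments. Unset Strict Implicit. Unset Printing Implicit Defensive.
Import Order.TTheory GRing.Theory Num.Theory.
Local Open Scope ring_scope.

Definition farey_elem (n : nat) (x : rat) : Prop :=
  exists p q : nat, [/\ (p < q)%N, (q <= n)%N, coprime p q & x = p%:R / q%:R].

Definition farey_pair (n p q r s : nat) : Prop :=
  [/\ (p < q)%N /\ (q <= n)%N /\ coprime p q,
      (r < s)%N /\ (s <= n)%N /\ coprime r s,
      (p%:R / q%:R : rat) < r%:R / s%:R &
      forall x : rat, farey_elem n x ->
        ~ ((p%:R / q%:R < x) && (x < r%:R / s%:R))].

(* phi_alpha(t) = (t^q - beta)^d - alpha^d t^(qd - s), beta = 1 - alpha,
   with an integer exponent (phi is a rational function of t). *)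
Definition phi (R : rcfType) (q s d : nat) (alpha : R) (t : R[i]) : R[i] :=
  (t ^+ q - ((1 - alpha)%:C)%C) ^+ d
  - ((alpha%:C)%C) ^+ d * t ^ ((q * d)%:Z - s%:Z).

Definition phi_root (R : rcfType) (q s d : nat) (alpha : R) (t : R[i]) : Prop :=
  (t != 0 \/ (s <= q * d)%N) /\ phi q s d alpha t = 0.

(* Neighbours p/q < r/s in F_n satisfy r q - p s = 1: the fraction X/Y with
   X q - Y p = 1 and n - q < Y <= n is in F_n, and r/s can be neither above it
   (X/Y would lie in between) nor below it (then s >= q + Y > n).
   A nonzero root t of phi_alpha satisfies (t^q - beta)^d = alpha^d t^(qd) / t^s.
   Taking absolute values, two roots of equal modulus have q-th powers that are
   equidistant from 0 and from beta, hence equal or conjugate; since conjugation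
   preserves roots we may assume t1^q = t2^q.  The equation then gives
   t1^s = t2^s, and r q - p s = 1 yields t1 = t2. *)

From HB Require Import structures.
From mathcomp Require Import all_boot all_order all_algebra.
From mathcomp Require Import reals complex.
From mathcomp Require Import zify ring.
Set Implicit Arguments.
Unset Strict Implicit.
Unset Printing Implicit Defensive.

Import Order.TTheory GRing.Theory Num.Theory.
Local Open Scope ring_scope.

Lemma ltr_frac_nat (a b c d : nat) : (0 < b)%N -> (0 < d)%N ->
  ((a%:R / b%:R : rat) < c%:R / d%:R) = (a * d < c * b)%N.
Proof.
move=> b_gt0 d_gt0.
rewrite ltr_pdivrMr ?ltr0n // mulrAC ltr_pdivlMr ?ltr0n //.
by rewrite -!natrM ltr_nat.
Qed.

Lemma farey_neighbour_candidate (n p q : nat) :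
  (0 < q)%N -> (q <= n)%N -> coprime p q ->
  exists X Y : nat, [/\ (X * q = Y * p + 1)%N, (Y <= n)%N & (n < Y + q)%N].
Proof.
move=> q_gt0 qn cpq.
have [a a_lt_q] := Bezoutr p q_gt0; rewrite (eqP cpq) => q_dvd.
set Y := (a + q * ((n - a) %/ q))%N.
have q_dvd_Y : (q %| Y * p + 1)%N.
  have -> : (Y * p + 1 = (1 + a * p) + q * ((n - a) %/ q * p))%N by rewrite /Y; ring.
  by rewrite dvdn_add // dvdn_mulr.
exists ((Y * p + 1) %/ q)%N, Y; split; first by rewrite divnK.
- have := divn_eq (n - a) q; lia.
- have := divn_eq (n - a) q; have := ltn_pmod (n - a) q_gt0; lia.
Qed.

Lemma farey_pair_det (n p q r s : nat) : farey_pair n p q r s ->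
  (r * q = p * s + 1)%N.
Proof.
move=> [[pq [qn cpq]] [rs [sn crs]] lt_pq_rs no_between].
have q_gt0 : (0 < q)%N by lia.
have s_gt0 : (0 < s)%N by lia.
rewrite ltr_frac_nat // in lt_pq_rs.
have [X [Y [detXY Yn nY]]] := farey_neighbour_candidate q_gt0 qn cpq.
have Y_gt0 : (0 < Y)%N by lia.
have X_gt0 : (0 < X)%N by nia.
have cXY : coprime X Y by apply/coprimeP => //; exists (q, p) => /=; lia.
case: (ltngtP (r * Y) (X * s)) => [lt_rs_XY | lt_XY_rs | eq_rs_XY].
- (* s = q (X s - r Y) + Y (r q - p s), and both brackets are positive *)
  have : (q + Y <= s)%N by nia.
  lia.
- exfalso; apply: (no_between (X%:R / Y%:R)).
    exists X, Y; split => //; nia.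
  by rewrite !ltr_frac_nat //; apply/andP; split; nia.
- have eq_sY : s = Y.
    have cYX : coprime Y X by rewrite coprime_sym.
    have csr : coprime s r by rewrite coprime_sym.
    apply/eqP; rewrite eqn_dvd -(Gauss_dvdr _ csr) -(Gauss_dvdr _ cYX).
    by rewrite eq_rs_XY dvdn_mull //= -eq_rs_XY dvdn_mull.
  have eq_rX : r = X.
    by apply/eqP; rewrite -(eqn_pmul2r Y_gt0) eq_rs_XY eq_sY.
  by rewrite eq_rX eq_sY detXY mulnC.
Qed.

Lemma expr_det_inj (F : idomainType) (x y : F) (a b u v : nat) :
  (u * a = v * b + 1)%N -> y != 0 -> x ^+ a = y ^+ a -> x ^+ b = y ^+ b -> x = y.
Proof.
move=> det y_neq0 eq_a eq_b.
have : x ^+ (v * b) * x = y ^+ (v * b) * y.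
  by rewrite -!exprSr -addn1 -det mulnC !exprM eq_a.
rewrite mulnC !exprM eq_b; apply: mulfI.
by rewrite !expf_neq0.
Qed.

Section ComplexPlane.
Variable R : rcfType.
Implicit Types (z : R[i]) (b : R).
Local Open Scope complex_scope.

Lemma real_complex_neq0 b : b != 0 -> b%:C%C != 0 :> R[i].
Proof. by apply: contra => /eqP[->]. Qed.

Lemma equidistant_eq_or_conj z1 z2 b : b != 0 ->
  `|z1| = `|z2| -> `|z1 - b%:C| = `|z2 - b%:C| -> z2 = z1 \/ z2 = z1^*.
Proof.
move=> b_neq0 eq_norm eq_norm_shift.
have conj_shift z : (z - b%:C)^* = z^* - b%:C.
  by rewrite rmorphB; congr (_ - _); apply: conjc_real.
have eq_sqr : z1 * z1^* = z2 * z2^* by rewrite -!sqr_normc eq_norm.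
have eq_sqr_shift : (z1 - b%:C) * (z1^* - b%:C) = (z2 - b%:C) * (z2^* - b%:C).
  by rewrite -!conj_shift -!sqr_normc eq_norm_shift.
have eq_re : z1 + z1^* = z2 + z2^*.
  have : b%:C * ((z1 + z1^*) - (z2 + z2^*)) = 0.
    transitivity ((z1 * z1^* - z2 * z2^*) -
      ((z1 - b%:C) * (z1^* - b%:C) - (z2 - b%:C) * (z2^* - b%:C))); first ring.
    by rewrite eq_sqr eq_sqr_shift !subrr.
  by move/eqP; rewrite mulf_eq0 (negPf (real_complex_neq0 b_neq0)) subr_eq0 => /eqP.
have : (z2 - z1) * (z2 - z1^*) = 0.
  transitivity (z2 * z2 - (z1 + z1^*) * z2 + z1 * z1^*); first ring.
  rewrite eq_re eq_sqr; ring.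
by move/eqP; rewrite mulf_eq0 !subr_eq0 => /orP[] /eqP; [left | right].
Qed.

End ComplexPlane.

Lemma expfz_subn (F : fieldType) (t : F) (a b : nat) : t != 0 ->
  t ^ (a%:Z - b%:Z) = t ^+ a / t ^+ b.
Proof. by move=> t_neq0; rewrite expfzDr // -exprnN. Qed.

Section PhiRoots.
Variables (R : rcfType) (q s d : nat) (alpha : R).
Implicit Types t : R[i].
Local Open Scope complex_scope.

Lemma phi_eq0 t : t != 0 -> (phi q s d alpha t == 0) =
  ((t ^+ q - (1 - alpha)%:C) ^+ d == alpha%:C ^+ d * (t ^+ q) ^+ d / t ^+ s).
Proof. by move=> t_neq0; rewrite /phi expfz_subn // exprM subr_eq0 mulrA. Qed.

Lemma phi_conj t : t != 0 -> phi q s d alpha t^* = (phi q s d alpha t)^*.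
Proof.
move=> t_neq0; rewrite /phi !expfz_subn ?conjc_eq0 //; move: (1 - alpha) => beta.
by rewrite !(rmorphB, rmorphM, rmorphXn) /= oppr0 conjc_inv rmorphXn.
Qed.

Lemma phi_root_norm_shift t1 t2 : (0 < d)%N -> t1 != 0 -> t2 != 0 ->
  phi q s d alpha t1 = 0 -> phi q s d alpha t2 = 0 -> `|t1| = `|t2| ->
  `|t1 ^+ q - (1 - alpha)%:C| = `|t2 ^+ q - (1 - alpha)%:C|.
Proof.
move=> d_gt0 t1_neq0 t2_neq0 /eqP + /eqP + eq_norm.
rewrite !phi_eq0 // => /eqP root1 /eqP root2.
apply/eqP; rewrite -(eqrXn2 d_gt0) ?normr_ge0 // -!normrX root1 root2.
by rewrite !normrM !normfV !normrX eq_norm.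
Qed.

Lemma phi_root_eq_of_exprq p r t1 t2 : (r * q = p * s + 1)%N -> alpha != 0 ->
  t1 != 0 -> t2 != 0 -> phi q s d alpha t1 = 0 -> phi q s d alpha t2 = 0 ->
  t2 ^+ q = t1 ^+ q -> t2 = t1.
Proof.
move=> det alpha_neq0 t1_neq0 t2_neq0 /eqP + /eqP + eq_q.
rewrite !phi_eq0 // eq_q => /eqP -> /eqP/esym.
have c_neq0 : alpha%:C ^+ d * (t1 ^+ q) ^+ d != 0.
  by rewrite mulf_neq0 ?expf_neq0 ?real_complex_neq0.
move=> /(mulfI c_neq0)/invr_inj eq_s.
exact: expr_det_inj det t1_neq0 eq_q eq_s.
Qed.

End PhiRoots.

Theorem theorem5p2 (R : realType) (n p q r s : nat) (alpha : R) (t1 t2 : R[i]) :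
  farey_pair n p q r s -> (q < s)%N -> (2 <= q)%N ->
  0 < alpha < 1 ->
  phi_root q s (n %/ q) alpha t1 -> phi_root q s (n %/ q) alpha t2 ->
  `|t1| = `|t2| ->
  t2 = t1 \/ t2 = (t1^*)%C.
Proof.
move=> farey _ _ /andP[alpha_gt0 alpha_lt1] [_ root1] [_ root2] eq_norm.
have det := farey_pair_det farey.
have d_gt0 : (0 < n %/ q)%N.
  by case: farey => [[pq [qn _]] _ _ _]; rewrite divn_gt0 //; lia.
have alpha_neq0 : alpha != 0 by rewrite gt_eqF.
have beta_neq0 : 1 - alpha != 0 by rewrite subr_eq0 eq_sym lt_eqF.
have [t1_eq0 | t1_neq0] := eqVneq t1 0.
  by left; apply/eqP; rewrite t1_eq0 -normr_eq0 -eq_norm t1_eq0 normr0.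
have t2_neq0 : t2 != 0 by rewrite -normr_eq0 -eq_norm normr_eq0.
have eq_norm_q : `|t1 ^+ q| = `|t2 ^+ q| by rewrite !normrX eq_norm.
have [eq_q | eq_conj_q] := equidistant_eq_or_conj beta_neq0 eq_norm_q
  (phi_root_norm_shift d_gt0 t1_neq0 t2_neq0 root1 root2 eq_norm).
  left; exact: phi_root_eq_of_exprq det alpha_neq0 t1_neq0 t2_neq0 root1 root2 eq_q.
right; apply: phi_root_eq_of_exprq det alpha_neq0 _ t2_neq0 _ root2 _.
- by rewrite conjc_eq0.
- by rewrite phi_conj // root1 conjc0.
- by rewrite eq_conj_q rmorphXn.
Qed.
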